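(* Let $\mathcal{Z}_0$ be the signaling scheme output by the Split-and-Match procedure on $\mathcal{D}$. Then for every $k\in[n]$, \[4\int_0^{F_{\mathcal{D}}(v_k)} s_{\mathcal{Z}_0}(x)\,dx\ \ge\ V_k-\max_{i\in[k]}\Big\{v_i\sum_{j=i}^k f_{\mathcal{D}}(v_j)\Big\},\qquad V_k=\sum_{i=1}^k v_i f_{\mathcal{D}}(v_i).\]
   Context: Values and prior. $0<v_1<\dots<v_n$ are reals, and $v_0:=0$. $\mathcal{D}$ is a distribution on $\{v_1,\dots,v_n\}$ with $f_{\mathcal{D}}(v_i)>0$ and CDF $F_{\mathcal{D}}$. Signals and pricing. A signal is a distribution $S$ on these values, with $G_S(p)=\Pr_{v\sim S}[v\ge p]$. The seller posts $p^*_S$, the smallest $v$ in the support of $S$ maximizing $v\,G_S(v)$. The surplus of value $v$ is $cs_v(S)=\mathbb{1}[v\ge p^*_S](v-p^*_S)$. Signaling schemes. A signaling scheme is $\mathcal{Z}=\{(S_q,\gamma_q)\}_{q\in[Q]}$ with $\gamma_q\ge0$, $\sum\gamma_q=1$ and $\sum_q\gamma_q f_{S_q}=f_{\mathcal{D}}$. Its expected consumer surplus at $v_i$ is $cs_{v_i}(\mathcal{Z})=\sum_q cs_{v_i}(S_q)\gamma_q f_{S_q}(v_i)/f_{\mathcal{D}}(v_i)$. The surplus-mass function $s_{\mathcal{Z}}$ on $(0,1]$ equals $cs_{v_i}(\mathcal{Z})$ on $(F_{\mathcal{D}}(v_{i-1}),F_{\mathcal{D}}(v_i)]$. Special signals.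 For $a<b$, the equal-revenue binary signal $S^E_{a,b}$ puts mass $1-a/b$ on $a$ and $a/b$ on $b$. A singleton signal on $v_i$ puts mass $1$ on $v_i$. Split-and-Match procedure. 1. Initialize $g_i=t_i=\tfrac12 f_{\mathcal{D}}(v_i)$ for all $i$. 2. Repeat: - let $s$ be the smallest index with $g_s>0$; - let $\ell$ be the smallest index $>s$ with $t_\ell>0$; - if no such pair $(s,\ell)$ exists, stop; - otherwise add the signal $S^E_{v_s,v_\ell}$ with weight $\gamma=\min\{g_s/(1-v_s/v_\ell),\ t_\ell/(v_s/v_\ell)\}$; - set $g_s\leftarrow g_s-\gamma(1-v_s/v_\ell)$ and $t_\ell\leftarrow t_\ell-\gamma v_s/v_\ell$. 3. Finally, the remaining (unused) mass of $\mathcal{D}$ at each $v_i$ is covered by a singleton signal on $v_i$ with that weight. The result is $\mathcal{Z}_0$. *)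

(* Values are indexed by 1..n (index i <-> value v_i);
   all distributions/signals are represented by their mass function on indices. *)
From HB Require Import structures.
From mathcomp Require Import all_boot all_order all_algebra.
Set Implicit Arguments. Unset Strict Implicit. Unset Printing Implicit Defensive.
Import Order.TTheory GRing.Theory Num.Theory.
Local Open Scope ring_scope.

Section Defs.
Variable R : realFieldType.
Variable n : nat.
Variable v : nat -> R.
Variable f : nat -> R.   (* f i = f_D(v_i) *)

Definition signal := nat -> R.

Definition G (S : signal) (j : nat) : R :=
  \sum_(1 <= l < n.+1 | v j <= v l) S l.

Definition rev (S : signal) (j : nat) : R := v j * G S j.

Definition in_supp (S : signal) (j : nat) : bool := 0 < S j.

Definition is_opt (S : signal) (j : nat) : bool :=
  in_supp S j && all (fun l => in_supp S l ==> (rev S l <= rev S j)) (iota 1 n).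

Definition pstar_idx (S : signal) : nat :=
  nth 0%N (iota 1 n) (find (is_opt S) (iota 1 n)).

Definition pstar (S : signal) : R := v (pstar_idx S).

Definition cs (S : signal) (i : nat) : R :=
  if pstar S <= v i then v i - pstar S else 0.

Definition scheme := seq (signal * R).

Definition cs_scheme (Z : scheme) (i : nat) : R :=
  \sum_(q <- Z) cs q.1 i * q.2 * q.1 i / f i.

(* integral of the surplus-mass function s_Z over (0, F_D(v_k)]:
   s_Z is constant equal to cs_{v_i}(Z) on (F_D(v_{i-1}), F_D(v_i)], an
   interval of length f_D(v_i); so the integral is this finite sum. *)
Definition int_surplus_mass (Z : scheme) (k : nat) : R :=
  \sum_(1 <= i < k.+1) cs_scheme Z i * f i.

Definition SE (a b : nat) : signal :=
  fun j => if j == a then 1 - v a / v b else if j == b then v a / v b else 0.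

Definition singleton (i : nat) : signal := fun j => if j == i then 1 else 0.

Definition sm_pair (g t : nat -> R) : option (nat * nat) :=
  match [seq i <- iota 1 n | 0 < g i] with
  | [::] => None
  | s :: _ =>
      match [seq l <- iota s.+1 (n - s) | 0 < t l] with
      | [::] => None
      | l :: _ => Some (s, l)
      end
  end.

Definition sm_gamma (g t : nat -> R) (s l : nat) : R :=
  Num.min (g s / (1 - v s / v l)) (t l / (v s / v l)).

(* main loop; fuel (2n+1) suffices since each round makes one of the 2n
   quantities g_s, t_l zero and none becomes positive again *)
Fixpoint sm_loop (fuel : nat) (g t : nat -> R) (acc : scheme) : scheme :=
  match fuel with
  | 0%N => acc
  | fuel'.+1 =>
      match sm_pair g t with
      | None => acc
      | Some (s, l) =>
          let gam := sm_gamma g t s l in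
          let g' := fun j => if j == s then g s - gam * (1 - v s / v l) else g j in
          let t' := fun j => if j == l then t l - gam * (v s / v l) else t j in
          sm_loop fuel' g' t' (rcons acc (SE s l, gam))
      end
  end.

Definition sm_binary : scheme :=
  sm_loop (2 * n).+1 (fun i => f i / 2) (fun i => f i / 2) [::].

Definition Z0 : scheme :=
  sm_binary ++
  [seq (singleton i, f i - \sum_(q <- sm_binary) q.2 * q.1 i) | i <- iota 1 n].

Definition Vk (k : nat) : R := \sum_(1 <= i < k.+1) v i * f i.

(* max_{i in [k]} v_i sum_{j=i}^k f_D(v_j)  (all terms positive, so 0 is a
   harmless neutral element when k >= 1) *)
Definition maxterm (k : nat) : R :=
  \big[Num.max/0]_(1 <= i < k.+1) (v i * \sum_(i <= j < k.+1) f j).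

End Defs.

(* Only the binary signals S^E_{v_s,v_l} produce surplus: value v_l gets
   v_l - v_s on the mass gamma v_s/v_l moved to it, and by the equal-revenue
   property this equals v_s times the mass gamma (1 - v_s/v_l) taken from v_s.
   Hence, while every matched upper index is at most k, the integral equals
   sum_i v_i (f_i/2 - g_i), where g is the unused lower half of D.
   Split-and-Match exhausts the lower halves from left to right.  Look at the
   first moment when the lowest index s with g_s > 0 can no longer be matched
   inside [1, k], i.e. all upper halves t_j with s < j <= k are used up.
   Then twice the integral bounds both sum_{i<s} v_i f_i and
   sum_{s<j<=k} (v_j - v_s) f_j, whose sum is V_k - v_s sum_{j=s}^k f_j,
   and the integral can only grow afterwards. *)

From mathcomp Require Import all_boot all_order all_algebra.
From mathcomp Require Import zify ring lra.
Set Implicit Arguments. Unset Strict Implicit. Unset Printing Implicit Defensive.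
Import Order.TTheory GRing.Theory Num.Theory.
Local Open Scope ring_scope.

Lemma filter_iota_cons (P : pred nat) a m s r :
  [seq i <- iota a m | P i] = s :: r ->
  [/\ (a <= s < a + m)%N, P s & forall i, (a <= i < s)%N -> ~~ P i].
Proof.
elim: m a => [|m IH] a //=; case Pa: (P a) => /=.
  by case=> <- _; split=> [|//|i]; lia.
move=> /IH [hs Ps below]; split=> //; first lia.
move=> i hi; have [<-|ai] := eqVneq a i; first by rewrite Pa.
by apply: below; lia.
Qed.

Lemma filter_iota_nil (P : pred nat) a m :
  [seq i <- iota a m | P i] = [::] -> forall i, (a <= i < a + m)%N -> ~~ P i.
Proof.
move=> E; have /hasPn noP : ~~ has P (iota a m) by rewrite has_filter E.
by move=> i hi; apply: noP; rewrite mem_iota.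
Qed.

Lemma sub_count_lt (T : Type) (a1 a2 : pred T) (r : seq T) :
  subpred a1 a2 -> has (fun x => a2 x && ~~ a1 x) r -> (count a1 r < count a2 r)%N.
Proof.
move=> sub12; elim: r => //= x r IH.
have le12 : (a1 x <= a2 x)%N by case: (a1 x) (sub12 x) => // ->.
case/orP => [/andP [a2x /negbTE a1x] | /IH]; last lia.
by rewrite a1x a2x add0n add1n ltnS sub_count.
Qed.

Lemma sum_partition_nat (V : nmodType) (T : Type) (r : seq T) (key : T -> nat)
    (F : T -> V) a c :
  \sum_(x <- r | (a <= key x < c)%N) F x =
  \sum_(a <= j < c) \sum_(x <- r | key x == j) F x.
Proof.
rewrite (eq_bigr (fun j => \sum_(x <- r) if key x == j then F x else 0));
  last by move=> j _; rewrite big_mkcond.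
rewrite exchange_big big_mkcond; apply: eq_bigr => x _.
by rewrite -big_mkcond (eq_bigl (fun j => j == key x)) ?big_nat1_eq.
Qed.

Lemma min_ratio_split (R : realFieldType) (a b r : R) :
  0 <= a -> 0 <= b -> 0 < r < 1 ->
  let gam := Num.min (a / (1 - r)) (b / r) in
  [/\ 0 <= gam, gam * (1 - r) <= a, gam * r <= b & gam * (1 - r) = a \/ gam * r = b].
Proof.
move=> a0 b0 /andP [r0 r1] gam; have r1' : 0 < 1 - r by rewrite subr_gt0.
have [h|h] := leP (a / (1 - r)) (b / r).
- have -> : gam = a / (1 - r) by exact: min_idPl.
  rewrite divfK ?lt0r_neq0 //; split; [exact: divr_ge0 a0 (ltW r1') | by [] | | by left].
  by rewrite -(ler_pM2r r0) divfK ?lt0r_neq0 in h.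
- have -> : gam = b / r by exact/min_idPr/ltW.
  rewrite divfK ?lt0r_neq0 //; split; [exact: divr_ge0 b0 (ltW r0) | | by [] | by right].
  by rewrite -(ltr_pM2r r1') divfK ?lt0r_neq0 // in h; apply: ltW.
Qed.

Section SplitAndMatch.
Variables (R : realFieldType) (n : nat) (v f : nat -> R).
Hypothesis v1_gt0 : 0 < v 1%N.
Hypothesis v_incr : forall i, (1 <= i)%N -> (i < n)%N -> v i < v i.+1.

Lemma v_lt i j : (1 <= i)%N -> (i < j)%N -> (j <= n)%N -> v i < v j.
Proof.
move=> i1; elim: j => // j IH; rewrite ltnS leq_eqVlt => /predU1P [<- | ij] jn.
  exact: v_incr i1 jn.
exact: lt_trans (IH ij (ltnW jn)) (v_incr (leq_trans i1 (ltnW ij)) jn).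
Qed.

Lemma v_le i j : (1 <= i)%N -> (i <= j)%N -> (j <= n)%N -> v i <= v j.
Proof. by move=> i1; rewrite leq_eqVlt => /predU1P [-> // | ij] jn; apply/ltW/v_lt. Qed.

Lemma v_gt0 i : (1 <= i)%N -> (i <= n)%N -> 0 < v i.
Proof.
rewrite leq_eqVlt => /predU1P [<- // | i1] iN.
exact: lt_trans v1_gt0 (v_lt (leqnn 1) i1 iN).
Qed.

Lemma pstar_idx_least (S : signal R) j : (1 <= j <= n)%N -> is_opt n v S j ->
  (forall i, in_supp S i -> (j <= i)%N) -> pstar_idx n v S = j.
Proof.
move=> hj optj least; rewrite /pstar_idx.
have -> : find (is_opt n v S) (iota 1 n) = j.-1.
  have -> : iota 1 n = iota 1 j.-1 ++ iota (1 + j.-1) (n - j).+1.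
    by rewrite -iotaD; congr iota; lia.
  rewrite find_cat size_iota (_ : (1 + j.-1)%N = j) /=; last lia.
  rewrite optj addn0 ifN //; apply/hasPn => i; rewrite mem_iota => hi.
  by apply/negP => /andP [/least]; lia.
by rewrite nth_iota; lia.
Qed.

Section EqualRevenue.
Variables s l : nat.
Hypotheses (s_ge1 : (1 <= s)%N) (s_lt_l : (s < l)%N) (l_le_n : (l <= n)%N).

Lemma ratio_in01 : 0 < v s / v l < 1.
Proof.
have vs0 : 0 < v s by apply: v_gt0; lia.
have vl0 : 0 < v l by apply: v_gt0; lia.
by rewrite divr_gt0 //= ltr_pdivrMr // mul1r v_lt.
Qed.

Lemma G_SE p : G n v (SE v s l) p =
  (if v p <= v s then 1 - v s / v l else 0) + (if v p <= v l then v s / v l else 0).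
Proof.
have SE_sum j : SE v s l j =
    (if j == s then 1 - v s / v l else 0) + (if j == l then v s / v l else 0).
  rewrite /SE; have [->|_] := eqVneq j s; last by rewrite add0r.
  by rewrite (ltn_eqF s_lt_l) addr0.
have s_in : (1 <= s < n.+1)%N by lia.
have l_in : (1 <= l < n.+1)%N by lia.
rewrite /G (eq_bigr _ (fun j _ => SE_sum j)) big_split /=.
by rewrite -big_mkcondr big_nat1_cond_eq -big_mkcondr big_nat1_cond_eq s_in l_in.
Qed.

Lemma in_supp_SE j : in_supp (SE v s l) j -> j = s \/ j = l.
Proof.
rewrite /in_supp /SE; have [->|_] := eqVneq j s; first by left.
by have [->|_] := eqVneq j l; [right | rewrite ltxx].
Qed.

Lemma is_opt_SE : is_opt n v (SE v s l) s.
Proof.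
have [_ r1] := andP ratio_in01; have vl0 : 0 < v l by apply: v_gt0; lia.
have rev_s : rev n v (SE v s l) s = v s.
  by rewrite /rev G_SE lexx (v_le s_ge1 (ltnW s_lt_l) l_le_n) subrK mulr1.
have rev_l : rev n v (SE v s l) l = v s.
  by rewrite /rev G_SE lexx leNgt (v_lt s_ge1 s_lt_l l_le_n) add0r mulrC divfK ?gt_eqF.
apply/andP; split; first by rewrite /in_supp /SE eqxx subr_gt0.
by apply/allP => j _; apply/implyP => /in_supp_SE [->|->]; rewrite ?rev_l rev_s.
Qed.

Lemma pstar_idx_SE : pstar_idx n v (SE v s l) = s.
Proof.
apply: pstar_idx_least is_opt_SE _; first lia.
by move=> i /in_supp_SE [->|->] //; apply: ltnW.
Qed.

Lemma SE_surplus_mass j :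
  cs n v (SE v s l) j * SE v s l j = if j == l then (v l - v s) * (v s / v l) else 0.
Proof.
rewrite /cs /pstar pstar_idx_SE /SE; have [->|js] := eqVneq j s.
  by rewrite (ltn_eqF s_lt_l) lexx subrr mul0r.
have [->|_] := eqVneq j l; last by rewrite mulr0.
by rewrite (v_le s_ge1 (ltnW s_lt_l) l_le_n).
Qed.

End EqualRevenue.

Lemma singleton_surplus_mass j i : (1 <= j <= n)%N ->
  cs n v (singleton R j) i * singleton R j i = 0.
Proof.
move=> hj; have supp_j p : in_supp (singleton R j) p -> p = j.
  by rewrite /in_supp /singleton; case: eqP => // _; rewrite ltxx.
have pstar_j : pstar_idx n v (singleton R j) = j.
  apply: pstar_idx_least => // [|p /supp_j -> //].
  apply/andP; split; first by rewrite /in_supp /singleton eqxx ltr01.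
  by apply/allP => p _; apply/implyP => /supp_j ->.
rewrite /cs /pstar pstar_j /singleton.
by have [->|_] := eqVneq i j; [rewrite lexx subrr mul0r | rewrite mulr0].
Qed.

Definition sm_update (h : nat -> R) (p : nat) (d : R) : nat -> R :=
  fun j => if j == p then h p - d else h j.

Lemma sm_update_pos (h : nat -> R) p d j : 0 <= d -> 0 < sm_update h p d j -> 0 < h j.
Proof. by rewrite /sm_update => d0; case: eqP => [-> ?|//]; lra. Qed.

Definition sm_next_g (g t : nat -> R) s l : nat -> R :=
  sm_update g s (sm_gamma v g t s l * (1 - v s / v l)).

Definition sm_next_t (g t : nat -> R) s l : nat -> R :=
  sm_update t l (sm_gamma v g t s l * (v s / v l)).

Definition count_pos (h : nat -> R) : nat := count (fun j => 0 < h j) (iota 1 n).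

Lemma count_pos_update h p d : 0 <= d -> (count_pos (sm_update h p d) <= count_pos h)%N.
Proof. by move=> d0; apply: sub_count => j; apply: sm_update_pos. Qed.

Lemma count_pos_exhaust h p : (1 <= p <= n)%N -> 0 < h p ->
  (count_pos (sm_update h p (h p)) < count_pos h)%N.
Proof.
move=> hp hp0; apply: sub_count_lt => [j|]; first exact/sm_update_pos/ltW.
by apply/hasP; exists p; [rewrite mem_iota; lia | rewrite /sm_update eqxx subrr ltxx hp0].
Qed.

Definition sm_measure (g t : nat -> R) : nat := (count_pos g + count_pos t)%N.

Lemma sm_pair_Some (g t : nat -> R) s l : sm_pair n g t = Some (s, l) ->
  [/\ (1 <= s)%N, (s < l <= n)%N, 0 < g s /\ 0 < t l,
      forall i, (1 <= i < s)%N -> g i <= 0 & forall j, (s < j < l)%N -> t j <= 0].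
Proof.
rewrite /sm_pair; case E1: [seq i <- iota 1 n | 0 < g i] => [|s' r] //.
case E2: [seq j <- iota s'.+1 (n - s') | 0 < t j] => [|l' r'] // [<- <-].
have [s_range gs below_s] := filter_iota_cons E1.
have [l_range tl below_l] := filter_iota_cons E2.
split; [lia | lia | by [] | move=> i hi | move=> j hj]; rewrite leNgt.
  by apply: below_s; lia.
by apply: below_l; lia.
Qed.

Lemma sm_pair_None (g t : nat -> R) : sm_pair n g t = None ->
  exists s, [/\ (1 <= s <= n.+1)%N, forall i, (1 <= i < s)%N -> g i <= 0 &
    (s <= n)%N -> 0 < g s /\ forall j, (s < j <= n)%N -> t j <= 0].
Proof.
rewrite /sm_pair; case E1: [seq i <- iota 1 n | 0 < g i] => [|s r].
  move=> _; exists n.+1; split; [lia | move=> i hi | by rewrite ltnn].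
  by rewrite leNgt; apply: (filter_iota_nil E1); lia.
case E2: [seq j <- iota s.+1 (n - s) | 0 < t j] => [|l r'] // _.
have [s_range gs below_s] := filter_iota_cons E1.
exists s; split; [lia | move=> i hi | move=> _; split=> // j hj]; rewrite leNgt.
  by apply: below_s; lia.
by apply: (filter_iota_nil E2); lia.
Qed.

Lemma sm_gamma_spec (g t : nat -> R) s l : sm_pair n g t = Some (s, l) ->
  let gam := sm_gamma v g t s l in
  [/\ 0 <= gam, gam * (1 - v s / v l) <= g s, gam * (v s / v l) <= t l &
      gam * (1 - v s / v l) = g s \/ gam * (v s / v l) = t l].
Proof.
move=> /sm_pair_Some [s1 /andP [sl ln] [gs tl] _ _].
exact: min_ratio_split (ltW gs) (ltW tl) (ratio_in01 s1 sl ln).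
Qed.

Lemma sm_measure_step (g t : nat -> R) s l : sm_pair n g t = Some (s, l) ->
  (sm_measure (sm_next_g g t s l) (sm_next_t g t s l) < sm_measure g t)%N.
Proof.
move=> E; have [s1 /andP [sl ln] [gs tl] _ _] := sm_pair_Some E.
have [gam0 _ _ exhausted] := sm_gamma_spec E.
have /andP [r0 r1] := ratio_in01 s1 sl ln; have r1' : 0 < 1 - v s / v l by rewrite subr_gt0.
have s_in : (1 <= s <= n)%N by lia.
have l_in : (1 <= l <= n)%N by lia.
rewrite /sm_measure /sm_next_g /sm_next_t; case: exhausted => ->.
  rewrite -addSn leq_add ?count_pos_exhaust //.
  exact/count_pos_update/mulr_ge0/ltW.
rewrite -addnS leq_add ?count_pos_exhaust //.
exact/count_pos_update/mulr_ge0/ltW.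
Qed.

(* A pairing [(s, l, gamma)] records one signal S^E_{v_s,v_l} of weight gamma
   added by Split-and-Match. *)
Local Notation lo x := x.1.1.
Local Notation hi x := x.1.2.
Local Notation wt x := x.2.

Definition pairing_signal (x : nat * nat * R) : signal R * R := (SE v (lo x) (hi x), wt x).

Definition valid_pairing (x : nat * nat * R) :=
  [/\ (1 <= lo x)%N, (lo x < hi x)%N, (hi x <= n)%N & 0 <= wt x].

Definition low_mass (x : nat * nat * R) := wt x * (1 - v (lo x) / v (hi x)).
Definition high_mass (x : nat * nat * R) := wt x * (v (lo x) / v (hi x)).

Section Pairing.
Variable x : nat * nat * R.
Hypothesis x_valid : valid_pairing x.

Lemma low_mass_ge0 : 0 <= low_mass x.
Proof.
case: x_valid => s1 sl ln w0; have /andP [_ r1] := ratio_in01 s1 sl ln.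
by rewrite mulr_ge0 // subr_ge0 ltW.
Qed.

Lemma high_mass_ge0 : 0 <= high_mass x.
Proof.
case: x_valid => s1 sl ln w0; have /andP [r0 _] := ratio_in01 s1 sl ln.
by rewrite mulr_ge0 // ltW.
Qed.

Lemma high_surplus_ge0 : 0 <= high_mass x * (v (hi x) - v (lo x)).
Proof.
case: x_valid => s1 sl ln _.
by rewrite mulr_ge0 ?high_mass_ge0 // subr_ge0 (v_le s1 (ltnW sl) ln).
Qed.

Lemma equal_revenue_surplus :
  high_mass x * (v (hi x) - v (lo x)) = low_mass x * v (lo x).
Proof.
case: x_valid => s1 sl ln _; have vl0 : v (hi x) != 0 by rewrite gt_eqF // v_gt0 //; lia.
by rewrite /low_mass /high_mass; field.
Qed.

End Pairing.

Hypothesis f_gt0 : forall i, (1 <= i <= n)%N -> 0 < f i.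
Variable k : nat.
Hypothesis k_le_n : (k <= n)%N.

Definition surplus (L : seq (nat * nat * R)) : R :=
  \sum_(x <- L | (hi x <= k)%N) high_mass x * (v (hi x) - v (lo x)).

Lemma surplus_ge0 L : {in L, forall x, valid_pairing x} -> 0 <= surplus L.
Proof.
move=> Lvalid; rewrite /surplus big_seq_cond sumr_ge0 // => x /andP [xL _].
exact/high_surplus_ge0/Lvalid.
Qed.

Lemma surplus_rcons L x : valid_pairing x -> surplus L <= surplus (rcons L x).
Proof.
move=> xv; rewrite /surplus -cats1 big_cat big_cons big_nil /= addr0.
by case: ifP => _; rewrite ?addr0 // lerDl high_surplus_ge0.
Qed.

Lemma int_surplus_mass_scheme (L : seq (nat * nat * R)) (w : nat -> R) :
  {in L, forall x, valid_pairing x} ->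
  int_surplus_mass n v f (map pairing_signal L ++ [seq (singleton R i, w i) | i <- iota 1 n]) k
  = surplus L.
Proof.
move=> Lvalid; rewrite /int_surplus_mass /cs_scheme.
set Z := _ ++ _.
rewrite (eq_big_nat _ _ (F2 := fun i => \sum_(q <- Z) cs n v q.1 i * q.1 i * q.2)); last first.
  move=> i hi; rewrite mulr_suml; apply: eq_bigr => q _.
  have fi0 : f i != 0 by rewrite gt_eqF // f_gt0 //; lia.
  by rewrite divfK // mulrAC.
rewrite exchange_big big_cat /= !big_map [X in _ + X]big1_seq ?addr0; last first.
  move=> j /andP [_]; rewrite mem_iota => hj; apply: big1 => i _ /=.
  by rewrite singleton_surplus_mass ?mul0r //; lia.
rewrite /surplus [RHS]big_mkcond /=; apply: eq_big_seq => x /Lvalid.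
case: x => [[s l] gam] [/= s1 sl ln _].
under eq_bigr => i _ do rewrite SE_surplus_mass //.
rewrite -big_distrl -big_mkcond big_nat1_eq /=.
have -> : (1 <= l < k.+1)%N = (l <= k)%N by apply/idP/idP; lia.
by case: ifP => _; rewrite ?mul0r // /high_mass /=; ring.
Qed.

Definition sm_inv (g t : nat -> R) (L : seq (nat * nat * R)) := [/\
  forall i, (1 <= i <= n)%N -> 0 <= g i /\ 0 <= t i,
  {in L, forall x, valid_pairing x},
  {in L, forall x i, (1 <= i < lo x)%N -> g i <= 0},
  forall i, (1 <= i <= n)%N -> g i = f i / 2 - \sum_(x <- L | lo x == i) low_mass x &
  forall j, (1 <= j <= n)%N -> t j = f j / 2 - \sum_(x <- L | hi x == j) high_mass x].

(* [m = k.+1] covers the case where all of [V_k] is already paid for. *)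
Definition certified (L : seq (nat * nat * R)) := exists m, [/\ (1 <= m <= k.+1)%N,
  \sum_(1 <= i < m) v i * f i <= 2 * surplus L &
  \sum_(m.+1 <= j < k.+1) (v j - v m) * f j <= 2 * surplus L].

Definition low_or_certified (L : seq (nat * nat * R)) :=
  {in L, forall x, (hi x <= k)%N} \/ certified L.

Lemma certified_mono L L' : surplus L <= surplus L' -> certified L -> certified L'.
Proof. by move=> le [m [hm prefix suffix]]; exists m; split=> //; lra. Qed.

Lemma Vk_split m : (1 <= m <= k.+1)%N ->
  Vk v f k = \sum_(1 <= i < m) v i * f i + v m * \sum_(m <= j < k.+1) f j
             + \sum_(m.+1 <= j < k.+1) (v j - v m) * f j.
Proof.
move=> hm; have drop_m : \sum_(m <= j < k.+1) (v j - v m) * f j =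
                         \sum_(m.+1 <= j < k.+1) (v j - v m) * f j.
  have [mk | km] := ltnP m k.+1; first by rewrite big_ltn // subrr mul0r add0r.
  by rewrite !big_geq // ltnW.
rewrite /Vk (big_cat_nat _ (n := m)) /=; [|lia|lia].
rewrite -addrA -drop_m mulr_sumr -big_split /=; congr (_ + _).
by apply: eq_bigr => j _; ring.
Qed.

Lemma maxterm_ge m : (1 <= m <= k.+1)%N -> v m * \sum_(m <= j < k.+1) f j <= maxterm v f k.
Proof.
move=> hm; have [mk | km] := ltnP m k.+1.
  by apply: (le_bigmax_seq _ m xpredT) => //; rewrite mem_index_iota; lia.
by rewrite big_geq // mulr0; apply: bigmax_ge_id.
Qed.

Lemma certified_bound L : certified L -> Vk v f k - maxterm v f k <= 4 * surplus L.
Proof. by move=> [m [hm prefix suffix]]; have := maxterm_ge hm; rewrite (Vk_split hm); lra. Qed.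

Section Invariant.
Variables (g t : nat -> R) (L : seq (nat * nat * R)).
Hypothesis inv : sm_inv g t L.

Lemma sm_inv_lo_le s : (1 <= s)%N -> 0 < g s -> {in L, forall x, (lo x <= s)%N}.
Proof.
case: inv => _ _ below _ _ s1 gs x xL; rewrite leqNgt; apply: contraTN gs => sx.
by rewrite -leNgt (below x xL) //; apply/andP.
Qed.

Lemma residual_eq i : (1 <= i <= n)%N ->
  f i / 2 - g i = \sum_(x <- L | lo x == i) low_mass x.
Proof. by case: inv => _ _ _ gE _ hi; rewrite gE // opprB subrKC. Qed.

Lemma residual_ge0 i : (1 <= i <= n)%N -> 0 <= f i / 2 - g i.
Proof.
case: inv => _ Lvalid _ _ _ hi; rewrite residual_eq // big_seq_cond sumr_ge0 // => x /andP [xL _].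
exact/low_mass_ge0/Lvalid.
Qed.

Lemma surplus_eq_residual : {in L, forall x, (hi x <= k)%N} ->
  surplus L = \sum_(1 <= i < n.+1) v i * (f i / 2 - g i).
Proof.
case: inv => _ Lvalid _ _ _ low.
transitivity (\sum_(x <- L | (1 <= lo x < n.+1)%N) low_mass x * v (lo x)).
  rewrite /surplus big_seq_cond [RHS]big_seq_cond; apply: eq_big => x.
    case xL: (x \in L) => //=; have [s1 sl ln _] := Lvalid x xL.
    by rewrite low //; apply/esym; lia.
  by move=> /andP [xL _]; apply/equal_revenue_surplus/Lvalid.
rewrite sum_partition_nat; apply: eq_big_nat => i hi.
rewrite (eq_bigr (fun x => low_mass x * v i)) => [|x /eqP -> //].
by rewrite -mulr_suml residual_eq 1?mulrC //; lia.
Qed.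

Lemma prefix_bound m : {in L, forall x, (hi x <= k)%N} -> (1 <= m <= n.+1)%N ->
  (forall i, (1 <= i < m)%N -> g i <= 0) -> \sum_(1 <= i < m) v i * f i <= 2 * surplus L.
Proof.
move=> low hm below; have [nonneg _ _ _ _] := inv.
rewrite (surplus_eq_residual low) [X in _ <= 2 * X](big_cat_nat _ (n := m)) /=; [|lia|lia].
have -> : \sum_(1 <= i < m) v i * (f i / 2 - g i) = (\sum_(1 <= i < m) v i * f i) / 2.
  rewrite mulr_suml; apply: eq_big_nat => i hi.
  have -> : g i = 0 by apply: le_anti; rewrite below // (nonneg i _).1 //; lia.
  by rewrite subr0 mulrA.
suff : 0 <= \sum_(m <= i < n.+1) v i * (f i / 2 - g i) by lra.
rewrite big_nat_cond sumr_ge0 // => i /andP [hi _].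
by rewrite mulr_ge0 ?residual_ge0 ?ltW ?v_gt0 //; lia.
Qed.

Lemma suffix_bound s : {in L, forall x, (lo x <= s)%N} -> (s <= k)%N ->
  (forall j, (s < j <= k)%N -> t j <= 0) ->
  \sum_(s.+1 <= j < k.+1) (v j - v s) * f j <= 2 * surplus L.
Proof.
move=> lo_le sk used; have [nonneg Lvalid _ _ tE] := inv.
have tE0 j : (s < j <= k)%N -> \sum_(x <- L | hi x == j) high_mass x = f j / 2.
  move=> hj; have jn : (1 <= j <= n)%N by lia.
  have t0 : t j = 0 by apply: le_anti; rewrite used // (nonneg j jn).2.
  by have := tE j jn; rewrite t0; lra.
suff : \sum_(x <- L | (s.+1 <= hi x < k.+1)%N) high_mass x * (v (hi x) - v s) <= surplus L.
  rewrite sum_partition_nat (eq_big_nat _ _ (F2 := fun j => (v j - v s) * f j / 2)).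
    by rewrite -mulr_suml; lra.
  move=> j hj; rewrite (eq_bigr (fun x => high_mass x * (v j - v s))) => [|x /eqP -> //].
  by rewrite -mulr_suml tE0 1?mulrC ?mulrA //; lia.
rewrite /surplus big_mkcond [X in _ <= X]big_mkcond /= big_seq [X in _ <= X]big_seq.
apply: ler_sum => x xL; have xv := Lvalid x xL; have [lo1 lohi hin _] := xv.
case: ifP => [/andP [sx xk] | _]; last by case: ifP => // _; apply: high_surplus_ge0.
rewrite ltnS in xk; rewrite xk ler_wpM2l ?high_mass_ge0 // lerD2l lerN2.
by apply: v_le => //; [apply: lo_le | lia].
Qed.

Lemma frontier_certified s : {in L, forall x, (hi x <= k)%N} -> (1 <= s <= n.+1)%N ->
  (forall i, (1 <= i < s)%N -> g i <= 0) ->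
  ((s <= k)%N -> 0 < g s /\ forall j, (s < j <= k)%N -> t j <= 0) -> certified L.
Proof.
move=> low hs below frontier; have [sk | ks] := leqP s k.
  have [gs used] := frontier sk; exists s; split; [lia | exact: prefix_bound | ].
  by apply: suffix_bound => //; apply: sm_inv_lo_le => //; lia.
exists k.+1; split; first lia.
  by apply: (prefix_bound low) => [|i hi]; [lia | apply: below; lia].
by rewrite big_geq // mulr_ge0 ?surplus_ge0 //; case: inv.
Qed.

End Invariant.


Lemma sm_inv_step g t L s l : sm_inv g t L -> sm_pair n g t = Some (s, l) ->
  sm_inv (sm_next_g g t s l) (sm_next_t g t s l) (rcons L (s, l, sm_gamma v g t s l)).
Proof.
move=> inv E; have [nonneg Lvalid below gE tE] := inv.
have [s1 /andP [sl ln] [gs tl] below_s _] := sm_pair_Some E.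
have [gam0 gle tle _] := sm_gamma_spec E.
rewrite /sm_next_g /sm_next_t /sm_update; set gam := sm_gamma v g t s l in gam0 gle tle *.
split.
- move=> i hi; have [g0 t0] := nonneg i hi.
  by split; case: eqP => _ //; rewrite subr_ge0.
- by move=> x; rewrite mem_rcons inE => /predU1P [-> | /Lvalid].
- move=> x; rewrite mem_rcons inE => /predU1P [-> i /= hi | xL i hi].
    by rewrite (ltn_eqF (_ : i < s)%N) ?below_s //; lia.
  have lo_le := sm_inv_lo_le inv s1 gs xL.
  by rewrite (ltn_eqF (_ : i < s)%N) ?(below x xL) //; lia.
- move=> i hi; rewrite -cats1 big_cat big_cons big_nil /= addr0 eq_sym.
  have [-> | _] := eqVneq i s; last by rewrite addr0 gE.
  by rewrite gE /low_mass /=; [ring | lia].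
- move=> j hj; rewrite -cats1 big_cat big_cons big_nil /= addr0 eq_sym.
  have [-> | _] := eqVneq j l; last by rewrite addr0 tE.
  by rewrite tE /high_mass /=; [ring | lia].
Qed.

Lemma low_or_certified_step g t L s l : sm_inv g t L -> sm_pair n g t = Some (s, l) ->
  low_or_certified L -> low_or_certified (rcons L (s, l, sm_gamma v g t s l)).
Proof.
move=> inv E track; have [s1 /andP [sl ln] [gs _] below_s used] := sm_pair_Some E.
have grow : surplus L <= surplus (rcons L (s, l, sm_gamma v g t s l)).
  have [_ Lvalid _ _ _] := sm_inv_step inv E.
  by apply/surplus_rcons/Lvalid; rewrite mem_rcons mem_head.
case: track => [low | cert]; last by right; apply: certified_mono grow cert.
have [lk | kl] := leqP l k.
  by left => x; rewrite mem_rcons inE => /predU1P [-> // | /low].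
right; apply: certified_mono grow _; apply: (frontier_certified inv low (s := s)) => //.
  lia.
by move=> _; split=> // j hj; apply: used; lia.
Qed.

Lemma sm_loop_final fuel g t L : (sm_measure g t < fuel)%N ->
  sm_inv g t L -> low_or_certified L ->
  exists g' t' L', [/\ sm_loop n v fuel g t (map pairing_signal L) = map pairing_signal L',
    sm_inv g' t' L', low_or_certified L' & sm_pair n g' t' = None].
Proof.
elim: fuel g t L => [|fuel IH] g t L //= fuel_gt inv track.
case E: (sm_pair n g t) => [[s l]|]; last by exists g, t, L.
rewrite (_ : rcons _ _ = map pairing_signal (rcons L (s, l, sm_gamma v g t s l))).
  apply: (IH (sm_next_g g t s l) (sm_next_t g t s l)).
  - by have := sm_measure_step E; lia.
  - exact: sm_inv_step.
  - exact: low_or_certified_step.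
by rewrite map_rcons.
Qed.

Lemma low_or_certified_final g t L : sm_inv g t L -> low_or_certified L ->
  sm_pair n g t = None -> certified L.
Proof.
move=> inv [low | //] /sm_pair_None [s [hs below frontier]].
apply: (frontier_certified inv low hs below) => sk.
have [gs used] := frontier (leq_trans sk k_le_n); split=> // j hj; apply: used; lia.
Qed.

Lemma Z0_surplus_bound : Vk v f k - maxterm v f k <= 4 * int_surplus_mass n v f (Z0 n v f) k.
Proof.
have inv0 : sm_inv (fun i => f i / 2) (fun i => f i / 2) [::].
  split=> // [i hi | i _ | j _]; rewrite ?big_nil ?subr0 //.
  by have f0 := ltW (f_gt0 hi); rewrite divr_ge0.
have fuel : (sm_measure (fun i => f i / 2) (fun i => f i / 2) < (2 * n).+1)%N.
  rewrite /sm_measure /count_pos.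
  by have := count_size (fun i => 0 < f i / 2) (iota 1 n); rewrite size_iota; lia.
have track0 : low_or_certified [::] by left=> x; rewrite in_nil.
have [g [t [L [loopE inv track stop]]]] := sm_loop_final fuel inv0 track0.
rewrite /Z0 /sm_binary [sm_loop _ _ _ _ _ _]loopE int_surplus_mass_scheme.
  exact/certified_bound/(low_or_certified_final inv track stop).
by case: inv.
Qed.

End SplitAndMatch.

Theorem lemma4 (R : realFieldType) (n : nat) (v f : nat -> R)
  (hv1 : 0 < v 1%N)
  (hvinc : forall i : nat, (1 <= i)%N -> (i < n)%N -> v i < v i.+1)
  (hfpos : forall i : nat, (1 <= i <= n)%N -> 0 < f i)
  (hfsum : \sum_(1 <= i < n.+1) f i = 1)
  (k : nat) (hk : (1 <= k <= n)%N) :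
  4 * int_surplus_mass n v f (Z0 n v f) k >= Vk v f k - maxterm v f k.
Proof.
by case/andP: hk => _ kn; apply: Z0_surplus_bound.
Qed.
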